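(* Let $L$ be a split regular Hom-Lie color algebra with symmetric root system $\Lambda$, and let $U$ be a vector space complement of $\mathrm{span}_{\mathbb{K}}\{[L_\alpha,L_{-\alpha}]:\alpha\in\Lambda\}$ in $H$. For each class $[\alpha]\in\Lambda/\sim$ put $I_{[\alpha]}:=L_{\Lambda_\alpha}$. Then each $I_{[\alpha]}$ is a well-defined ideal of $L$, $$L=U+\sum_{[\alpha]\in\Lambda/\sim}I_{[\alpha]},$$ and $[I_{[\alpha]},I_{[\beta]}]=0$ whenever $[\alpha]\neq[\beta]$.
   Context: Let $\mathbb{K}$ be a field and $\Gamma$ an abelian group. A bi-character is $\varepsilon:\Gamma\times\Gamma\to\mathbb{K}\setminus\{0\}$ with $\varepsilon(a,b)\varepsilon(b,a)=1$, $\varepsilon(a,b+c)=\varepsilon(a,b)\varepsilon(a,c)$, $\varepsilon(a+b,c)=\varepsilon(a,c)\varepsilon(b,c)$. A Hom-Lie color algebra $(L,[\cdot,\cdot],\phi,\varepsilon)$ is a $\Gamma$-graded space $L=\bigoplus_gL_g$ with bilinear $[\cdot,\cdot]$, $[L_g,L_h]\subset L_{g+h}$, linear $\phi$ with $\phi(L_g)\subset L_g$, $\phi([x,y])=[\phi x,\phi y]$, such that for homogeneous $x,y,z$ of degrees $\bar x,\bar y,\bar z$: $[x,y]=-\varepsilon(\bar x,\bar y)[y,x]$ and $\varepsilon(\bar z,\bar x)[\phi(x),[y,z]]+\varepsilon(\bar x,\bar y)[\phi(y),[z,x]]+\varepsilon(\bar y,\bar z)[\phi(z),[x,y]]=0$;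 regular means $\phi$ bijective. A subalgebra is a graded subspace $A$ with $[A,A]\subset A$, $\phi(A)=A$; abelian if $[A,A]=0$. An ideal is a graded subspace $I$ with $[I,L]\subset I$ and $\phi(I)=I$. $H=\bigoplus_gH_g$ is a maximal abelian graded subalgebra (so $\phi(H_0)=H_0$). For linear $\alpha:H_0\to\mathbb{K}$, $L_\alpha=\{v:[h,v]=\alpha(h)\phi(v)\ \forall h\in H_0\}$; $\Lambda=\{\alpha\in H_0^*\setminus\{0\}:L_\alpha\neq0\}$; $L$ is split if $L=H\oplus(\bigoplus_{\alpha\in\Lambda}L_\alpha)$. $\Lambda$ is symmetric if $\alpha\in\Lambda\Rightarrow-\alpha\in\Lambda$. For $z\in\mathbb{Z}$, $\alpha\phi^{z}:=\alpha\circ(\phi|_{H_0})^{z}$; $\mathbb{N}=\{0,1,2,\dots\}$. Connection: for $\alpha,\beta\in\Lambda$, $\alpha$ is connected to $\beta$ if there exist $k\ge1$ and $\alpha_1,\dots,\alpha_k\in\Lambda$ such that: if $k=1$, $\alpha_1\in\{\alpha\phi^{-n}:n\in\mathbb{N}\}\cap\{\pm\beta\phi^{-m}:m\in\mathbb{N}\}$; if $k\ge2$, then $\alpha_1\in\{\alpha\phi^{-n}:n\in\mathbb{N}\}$, for each $i=1,\dots,k-2$ one has $\alpha_1\phi^{-i}+\alpha_2\phi^{-i}+\alpha_3\phi^{-i+1}+\cdots+\alpha_{i+1}\phi^{-1}\in\Lambda$, and $\alpha_1\phi^{-k+1}+\alpha_2\phi^{-k+1}+\alpha_3\phi^{-k+2}+\cdots+\alpha_k\phi^{-1}\in\{\pm\beta\phi^{-m}:m\in\mathbb{N}\}$.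 Connectedness $\sim$ is an equivalence relation on $\Lambda$; $\Lambda_\alpha:=\{\beta\in\Lambda:\beta\sim\alpha\}$. Define $H_{\Lambda_\alpha}:=\mathrm{span}_{\mathbb{K}}\{[L_\beta,L_{-\beta}]:\beta\in\Lambda_\alpha\}\subset H$, $V_{\Lambda_\alpha}:=\bigoplus_{\beta\in\Lambda_\alpha}L_\beta$, and $L_{\Lambda_\alpha}:=H_{\Lambda_\alpha}\oplus V_{\Lambda_\alpha}$. *)

(* Subspaces/subsets are Prop-valued predicates L -> Prop.
   Linear forms alpha : H_0 -> K are represented by arbitrary functions
   L -> K, only their values on H_0 matter (equality "eqH0" = agreement on H_0). *)
From HB Require Import structures.
From mathcomp Require Import all_boot all_order all_algebra.
Import GRing.Theory.
Local Open Scope ring_scope.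

Section HomLieColor.
Context {K : fieldType} {G : zmodType} {L : lmodType K}.
Variable br : L -> L -> L.
Variable phi : L -> L.
Variable phiinv : L -> L.
Variable eps : G -> G -> K.
Variable grading : G -> L -> Prop.
Variable H : L -> Prop.

Definition subspace (S : L -> Prop) : Prop :=
  S 0 /\ forall (a : K) x y, S x -> S y -> S (a *: x + y).

Definition span (P : L -> Prop) (v : L) : Prop :=
  exists n (c : 'I_n -> K) (w : 'I_n -> L),
    (forall i, P (w i)) /\ v = \sum_(i < n) c i *: w i.

Definition bicharacter : Prop :=
  (forall a b, eps a b != 0) /\
  (forall a b, eps a b * eps b a = 1) /\
  (forall a b c, eps a (b + c) = eps a b * eps a c) /\
  (forall a b c, eps (a + b) c = eps a c * eps b c).

Definition graded_space : Prop :=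
  (forall g, subspace (grading g)) /\
  (forall v, exists n (g : 'I_n -> G) (x : 'I_n -> L),
      injective g /\ (forall i, grading (g i) (x i)) /\ v = \sum_(i < n) x i) /\
  (forall n (g : 'I_n -> G) (x : 'I_n -> L),
      injective g -> (forall i, grading (g i) (x i)) ->
      \sum_(i < n) x i = 0 -> forall i, x i = 0).

Definition graded_subspace (A : L -> Prop) : Prop :=
  subspace A /\
  forall v, A v -> exists n (g : 'I_n -> G) (x : 'I_n -> L),
      injective g /\ (forall i, grading (g i) (x i) /\ A (x i)) /\
      v = \sum_(i < n) x i.

Definition HomLieColorAlgebra : Prop :=
  graded_space /\ bicharacter /\
  (forall (a : K) x y z, br (a *: x + y) z = a *: br x z + br y z) /\
  (forall (a : K) x y z, br z (a *: x + y) = a *: br z x + br z y) /\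
  (forall g h x y, grading g x -> grading h y -> grading (g + h) (br x y)) /\
  (forall (a : K) x y, phi (a *: x + y) = a *: phi x + phi y) /\
  (forall g x, grading g x -> grading g (phi x)) /\
  (forall x y, phi (br x y) = br (phi x) (phi y)) /\
  (forall g h x y, grading g x -> grading h y ->
     br x y = - (eps g h *: br y x)) /\
  (forall gx gy gz x y z, grading gx x -> grading gy y -> grading gz z ->
     eps gz gx *: br (phi x) (br y z) + eps gx gy *: br (phi y) (br z x)
     + eps gy gz *: br (phi z) (br x y) = 0).

Definition subalgebra (A : L -> Prop) : Prop :=
  graded_subspace A /\
  (forall x y, A x -> A y -> A (br x y)) /\
  (forall x, A x -> A (phi x)) /\ (forall y, A y -> exists x, A x /\ phi x = y).

Definition abelian (A : L -> Prop) : Prop :=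
  forall x y, A x -> A y -> br x y = 0.

Definition max_abelian_graded_subalgebra : Prop :=
  subalgebra H /\ abelian H /\
  forall B, subalgebra B -> abelian B -> (forall x, H x -> B x) ->
    forall x, B x -> H x.

Definition ideal (I : L -> Prop) : Prop :=
  graded_subspace I /\
  (forall x y, I x -> I (br x y)) /\
  (forall x, I x -> I (phi x)) /\ (forall y, I y -> exists x, I x /\ phi x = y).

Definition H0 (h : L) : Prop := H h /\ grading 0 h.

Definition linear_on_H0 (a : L -> K) : Prop :=
  forall (c : K) h1 h2, H0 h1 -> H0 h2 -> a (c *: h1 + h2) = c * a h1 + a h2.

Definition weight_space (a : L -> K) (v : L) : Prop :=
  forall h, H0 h -> br h v = a h *: phi v.

Definition inLambda (a : L -> K) : Prop :=
  linear_on_H0 a /\ (exists h, H0 h /\ a h != 0) /\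
  (exists v, v != 0 /\ weight_space a v).

Definition eqH0 (a b : L -> K) : Prop := forall h, H0 h -> a h = b h.

Definition oppf (a : L -> K) : L -> K := fun h => - a h.

(* alpha phi^{-n} := alpha o (phi|_{H_0})^{-n} *)
Definition rphi (a : L -> K) (n : nat) : L -> K := fun h => a (iter n phiinv h).

Definition split_alg : Prop :=
  (forall v, exists h n (a : 'I_n -> L -> K) (x : 'I_n -> L),
     H h /\ (forall i, inLambda (a i) /\ weight_space (a i) (x i)) /\
     v = h + \sum_(i < n) x i) /\
  (forall h n (a : 'I_n -> L -> K) (x : 'I_n -> L),
     H h -> (forall i, inLambda (a i) /\ weight_space (a i) (x i)) ->
     (forall i j, i != j -> ~ eqH0 (a i) (a j)) ->
     h + \sum_(i < n) x i = 0 -> h = 0 /\ forall i, x i = 0).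

Definition symmetric_roots : Prop :=
  forall a, inLambda a -> inLambda (oppf a).

Definition in_orbit (c a : L -> K) : Prop := exists n, eqH0 c (rphi a n).
Definition in_pm_orbit (c b : L -> K) : Prop :=
  exists m, eqH0 c (rphi b m) \/ eqH0 c (oppf (rphi b m)).

(* alpha_1 phi^{-i} + alpha_2 phi^{-i} + alpha_3 phi^{-i+1} + ... + alpha_{i+1} phi^{-1} *)
Definition psum (s : nat -> L -> K) (i : nat) : L -> K :=
  fun h => rphi (s 1%N) i h + \sum_(2 <= j < i.+2) rphi (s j) (i.+2 - j) h.

Definition connected (a b : L -> K) : Prop :=
  exists (k : nat) (s : nat -> L -> K),
    (1 <= k)%N /\ (forall j, (1 <= j <= k)%N -> inLambda (s j)) /\
    if k == 1%N then in_orbit (s 1%N) a /\ in_pm_orbit (s 1%N) b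
    else in_orbit (s 1%N) a /\
         (forall i, (1 <= i <= k - 2)%N -> inLambda (psum s i)) /\
         in_pm_orbit (psum s (k - 1)) b.

Definition inClass (a b : L -> K) : Prop := inLambda b /\ connected b a.

Definition HLam (a : L -> K) : L -> Prop :=
  span (fun w => exists b x y, inClass a b /\ weight_space b x /\
                  weight_space (oppf b) y /\ w = br x y).

Definition VLam (a : L -> K) (v : L) : Prop :=
  exists n (b : 'I_n -> L -> K) (x : 'I_n -> L),
    (forall i, inClass a (b i) /\ weight_space (b i) (x i)) /\
    v = \sum_(i < n) x i.

Definition LLam (a : L -> K) (v : L) : Prop :=
  exists h w, HLam a h /\ VLam a w /\ v = h + w.

Definition HLamAll : L -> Prop :=
  span (fun w => exists b x y, inLambda b /\ weight_space b x /\
                  weight_space (oppf b) y /\ w = br x y).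

Definition complement_in_H (U : L -> Prop) : Prop :=
  subspace U /\ (forall u, U u -> H u) /\
  (forall v, U v -> HLamAll v -> v = 0) /\
  (forall h, H h -> exists u w, U u /\ HLamAll w /\ h = u + w).

End HomLieColor.

(* Brackets of root spaces add roots up to a twist by phi^-1:
   [L_a, L_b] lies in L_((a + b) phi^-1), and a connection from a to b is a
   chain of such twisted partial sums that stay roots.  Chains can be reversed
   and concatenated, so connectedness is an equivalence, and [L_a, L_b] = 0
   whenever a and b are not connected, since otherwise the sum would connect
   them.  Through the Jacobi identity this also kills [[L_a, L_-a], L_b], so
   the I_[a] of different classes commute; the same computations show that
   I_[a] is stable under brackets with H and with each root space, and under
   phi and phi^-1.  Since a vector of weight 0 lies in H, the brackets
   [L_a, L_-a] lie in H, and L = H + sum L_a with H = U + span [L_a, L_-a]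
   gives L = U + sum I_[a]. *)

From Pilot Require Import Defs.
From HB Require Import structures.
From mathcomp Require Import all_boot all_order all_algebra.
From mathcomp Require Import zify boolp.
Import GRing.Theory.
Local Open Scope ring_scope.

Local Notation oppf := Defs.oppf.
Local Notation span := Defs.span.
Local Notation in_orbit := Defs.in_orbit.

Set Implicit Arguments.
Unset Strict Implicit.

Section LinearMaps.
Variables (K : pzRingType) (L : lmodType K) (f : L -> L).
Hypothesis f_lin : linear f.

Lemma lin0 : f 0 = 0.
Proof.
have h := f_lin 1 0 0; rewrite !scale1r !addr0 in h.
by apply: (addrI (f 0)); rewrite addr0 -h.
Qed.

Lemma linD x y : f (x + y) = f x + f y.
Proof. by rewrite -{1}[x]scale1r f_lin scale1r. Qed.

Lemma linZ (c : K) x : f (c *: x) = c *: f x.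
Proof. by rewrite -[c *: x]addr0 f_lin lin0 addr0. Qed.

Lemma linN x : f (- x) = - f x.
Proof. by rewrite -scaleN1r linZ scaleN1r. Qed.

Lemma lin_sum (I : Type) (r : seq I) (P : pred I) (F : I -> L) :
  f (\sum_(i <- r | P i) F i) = \sum_(i <- r | P i) f (F i).
Proof. exact: (big_morph f linD lin0). Qed.

End LinearMaps.

Section Subspaces.
Variables (K : fieldType) (L : lmodType K).
Implicit Types (S P : L -> Prop).

Lemma subspace0 S : subspace S -> S 0.
Proof. by case. Qed.

Lemma subspaceD S : subspace S -> forall x y, S x -> S y -> S (x + y).
Proof. by case=> _ hS x y hx hy; have := hS 1 _ _ hx hy; rewrite scale1r. Qed.

Lemma subspaceZ S : subspace S -> forall (c : K) x, S x -> S (c *: x).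
Proof. by case=> S0 hS c x hx; have := hS c _ _ hx S0; rewrite addr0. Qed.

Lemma subspaceN S : subspace S -> forall x, S x -> S (- x).
Proof. by move=> hS x hx; rewrite -scaleN1r; apply: subspaceZ. Qed.

Lemma subspace_sum S : subspace S ->
  forall (I : Type) (r : seq I) (P : pred I) (F : I -> L),
  (forall i, P i -> S (F i)) -> S (\sum_(i <- r | P i) F i).
Proof.
move=> hS I r P F hF; apply: (big_ind S) => //; [exact: subspace0 | exact: subspaceD].
Qed.

Lemma subspace_ker (f : L -> L) : linear f -> subspace (fun v => f v = 0).
Proof. by move=> f_lin; split=> [|c x y hx hy]; rewrite ?lin0 // f_lin hx hy scaler0 addr0. Qed.

Lemma subspace_preim (f : L -> L) S : linear f -> subspace S ->
  subspace (fun v => S (f v)).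
Proof.
move=> f_lin [S0 hS]; split; first by rewrite lin0.
by move=> c x y hx hy; rewrite f_lin; apply: hS.
Qed.

Definition fsum_of (T : Type) (Q : T -> L -> Prop) (v : L) : Prop :=
  exists n (t : 'I_n -> T) (x : 'I_n -> L),
    (forall i, Q (t i) (x i)) /\ v = \sum_(i < n) x i.

Variables (T : Type) (Q : T -> L -> Prop).

Lemma fsum_of0 : fsum_of Q 0.
Proof.
exists 0%N, (fun i : 'I_0 => False_rect T (notF (ltn_ord i))), (fun=> 0).
by split=> [[]//|]; rewrite big_ord0.
Qed.

Lemma fsum_of_gen t x : Q t x -> fsum_of Q x.
Proof. by move=> hx; exists 1%N, (fun=> t), (fun=> x); rewrite big_ord1. Qed.

Lemma fsum_ofD u v : fsum_of Q u -> fsum_of Q v -> fsum_of Q (u + v).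
Proof.
move=> [n [t [x [hx ->]]]] [m [t' [x' [hx' ->]]]].
pose cat (A : Type) (f : 'I_n -> A) (g : 'I_m -> A) (k : 'I_(n + m)) :=
  match split k with inl i => f i | inr j => g j end.
exists (n + m)%N, (cat _ t t'), (cat _ x x'); split.
  by move=> k; rewrite /cat; case: (split k).
rewrite big_split_ord /cat; congr (_ + _); apply: eq_bigr => i _.
  by rewrite -[lshift m i]/(unsplit (inl i)) unsplitK.
by rewrite -[rshift n i]/(unsplit (inr i)) unsplitK.
Qed.

Lemma fsum_ofZ (s : K -> T -> T) :
  (forall c t x, Q t x -> Q (s c t) (c *: x)) ->
  forall c v, fsum_of Q v -> fsum_of Q (c *: v).
Proof.
move=> hQ c _ [n [t [x [hx ->]]]]; exists n, (s c \o t), (fun i => c *: x i).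
by split=> [i|]; [exact: hQ | rewrite scaler_sumr].
Qed.

Lemma fsum_of_subspace (s : K -> T -> T) :
  (forall c t x, Q t x -> Q (s c t) (c *: x)) -> subspace (fsum_of Q).
Proof.
move=> hQ; split; first exact: fsum_of0.
by move=> c x y hx hy; apply: fsum_ofD => //; apply: fsum_ofZ hQ _ _ hx.
Qed.

Lemma fsum_of_ind P : subspace P -> (forall t x, Q t x -> P x) ->
  forall v, fsum_of Q v -> P v.
Proof.
move=> hP hQ _ [n [t [x [hx ->]]]].
by apply: subspace_sum => // i _; apply: hQ (hx i).
Qed.

Lemma fsum_of_mono (Q' : T -> L -> Prop) : (forall t x, Q t x -> Q' t x) ->
  forall v, fsum_of Q v -> fsum_of Q' v.
Proof. by move=> hQ _ [n [t [x [hx ->]]]]; exists n, t, x; split=> // i; apply: hQ. Qed.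

End Subspaces.

Arguments fsum_of_gen {K L T} Q t x.
Arguments fsum_of_subspace {K L T} Q s.
Arguments fsum_of_ind {K L T} Q P.
Arguments fsum_of_mono {K L T} Q Q'.

Section Span.
Variables (K : fieldType) (L : lmodType K).
Implicit Types (P S : L -> Prop).

Lemma spanE P v :
  span P v <-> fsum_of (fun (cu : K * L) w => P cu.2 /\ w = cu.1 *: cu.2) v.
Proof.
split=> [[n [c [w [hw ->]]]] | [n [t [x [hx ->]]]]].
  by exists n, (fun i => (c i, w i)), (fun i => c i *: w i); split=> // i; split=> /=.
exists n, (fun i => (t i).1), (fun i => (t i).2); split=> [i|]; first by case: (hx i).
by apply: eq_bigr => i _; case: (hx i).
Qed.

Lemma span_subspace P : subspace (span P).
Proof.
have [S0 hS] : subspace (fsum_of (fun (cu : K * L) w => P cu.2 /\ w = cu.1 *: cu.2)).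
  apply: (fsum_of_subspace _ (fun c cu => (c * cu.1, cu.2))).
  by move=> c [d u] x /= [hu ->]; rewrite scalerA.
by split=> [|c x y]; rewrite !spanE //; apply: hS.
Qed.

Lemma span_gen P w : P w -> span P w.
Proof. by move=> hw; apply/spanE; apply: (fsum_of_gen _ (1, w)); rewrite scale1r. Qed.

Lemma span_ind P S : subspace S -> (forall w, P w -> S w) -> forall v, span P v -> S v.
Proof.
move=> hS hP v /spanE; apply: fsum_of_ind => // -[c u] w [/hP hu ->].
exact: subspaceZ.
Qed.

Lemma span_mono P S : (forall w, P w -> S w) -> forall v, span P v -> span S v.
Proof.
move=> hPS v /spanE hv; apply/spanE; apply: (fsum_of_mono _ _ _ _ hv) => t w [hw ->].
by split=> //; apply: hPS.
Qed.

End Span.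

Lemma sum_by_value (I : finType) (T : eqType) (V : nmodType) (g : I -> T) (x : I -> V) :
  \sum_i x i = \sum_(d <- undup (map g (enum I))) \sum_(i | g i == d) x i.
Proof.
under [RHS]eq_bigr => d _ do rewrite big_mkcond.
rewrite exchange_big /=; apply: eq_bigr => i _.
rewrite -big_mkcond /= -big_filter.
have -> : [seq d <- undup [seq g j | j <- enum I] | g i == d] = [:: g i].
  rewrite -(@filter_pred1_uniq _ (undup [seq g j | j <- enum I]) (g i)) ?undup_uniq //.
    by apply: eq_filter => d /=; rewrite eq_sym.
  by rewrite mem_undup; apply: map_f; rewrite mem_enum.
by rewrite big_seq1.
Qed.

Section GradedSubspaces.
Variables (K : fieldType) (G : zmodType) (L : lmodType K) (grading : G -> L -> Prop).
Hypothesis gr_subspace : forall g, subspace (grading g).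

Definition homog_sums (X : L -> Prop) : L -> Prop :=
  fsum_of (fun g x => grading g x /\ X x).

Lemma homog_sums_subspace X : subspace X -> subspace (homog_sums X).
Proof.
move=> hX; apply: (fsum_of_subspace _ (fun _ g => g)) => c g x [gx hx].
by split; apply: subspaceZ.
Qed.

Lemma homog_sums_gen X g x : grading g x -> X x -> homog_sums X x.
Proof. by move=> gx hx; apply: (fsum_of_gen _ g). Qed.

(* group the homogeneous summands by degree to get distinct degrees *)
Lemma graded_subspace_of_homog_sums X : subspace X ->
  (forall v, X v -> homog_sums X v) -> graded_subspace grading X.
Proof.
move=> hX hv; split=> // v /hv [n [g [x [hx ->]]]].
set D := undup (map g (enum 'I_n)).
have uD : uniq D by rewrite undup_uniq.
exists (size D), (fun j => nth 0 D j), (fun j => \sum_(i | g i == nth 0 D j) x i).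
split; first by move=> j k /= e; apply: val_inj; apply: (uniqP 0 uD) e; rewrite inE.
split=> [j|]; last by rewrite (sum_by_value g x) (big_nth 0) big_mkord.
split; first by apply: (subspace_sum (gr_subspace _)) => i /eqP <-; case: (hx i).
by apply: (subspace_sum hX) => i _; case: (hx i).
Qed.

End GradedSubspaces.

(** * Root spaces *)

Section HomLieColorRoots.
Variables (K : fieldType) (G : zmodType) (L : lmodType K).
Variables (br : L -> L -> L) (phi phiinv : L -> L) (eps : G -> G -> K)
  (grading : G -> L -> Prop) (H : L -> Prop).
Hypothesis hA : HomLieColorAlgebra br phi eps grading.
Hypothesis phiK : cancel phi phiinv.
Hypothesis phiinvK : cancel phiinv phi.
Hypothesis hmax : max_abelian_graded_subalgebra br phi grading H.
Hypothesis hsplit : split_alg br phi grading H.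
Hypothesis hsym : symmetric_roots br phi grading H.

Local Notation gr := grading.
Local Notation H_0 := (H0 grading H).
Local Notation eqh := (eqH0 grading H).
Local Notation WS := (weight_space br phi grading H).
Local Notation Lam := (inLambda br phi grading H).
Local Notation rph := (rphi phiinv).

Lemma graded_L : graded_space grading. Proof. by case: hA. Qed.
Lemma eps_bichar : bicharacter eps. Proof. by case: hA => _ []. Qed.
Lemma br_linl z : linear (br ^~ z).
Proof. by case: hA => _ [_ [h _]] a x y; apply: h. Qed.
Lemma br_linr z : linear (br z).
Proof. by case: hA => _ [_ [_ [h _]]] a x y; apply: h. Qed.
Lemma br_graded g1 g2 x y : gr g1 x -> gr g2 y -> gr (g1 + g2) (br x y).
Proof. by case: hA => _ [_ [_ [_ [h _]]]]; apply: h. Qed.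
Lemma phi_lin : linear phi.
Proof. by case: hA => _ [_ [_ [_ [_ [h _]]]]] a x y; apply: h. Qed.
Lemma phi_graded g x : gr g x -> gr g (phi x).
Proof. by case: hA => _ [_ [_ [_ [_ [_ [h _]]]]]]; apply: h. Qed.
Lemma phi_br x y : phi (br x y) = br (phi x) (phi y).
Proof. by case: hA => _ [_ [_ [_ [_ [_ [_ [h _]]]]]]]; apply: h. Qed.
Lemma br_skew g1 g2 x y : gr g1 x -> gr g2 y -> br x y = - (eps g1 g2 *: br y x).
Proof. by case: hA => _ [_ [_ [_ [_ [_ [_ [_ [h _]]]]]]]]; apply: h. Qed.
Lemma br_jacobi gx gy gz x y z : gr gx x -> gr gy y -> gr gz z ->
  eps gz gx *: br (phi x) (br y z) + eps gx gy *: br (phi y) (br z x)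
  + eps gy gz *: br (phi z) (br x y) = 0.
Proof. by case: hA => _ [_ [_ [_ [_ [_ [_ [_ [_ h]]]]]]]]; apply: h. Qed.

Lemma br0l z : br 0 z = 0. Proof. exact: lin0 (br_linl z). Qed.
Lemma br0r z : br z 0 = 0. Proof. exact: lin0 (br_linr z). Qed.
Lemma brDr x y z : br z (x + y) = br z x + br z y. Proof. exact: (linD (br_linr z) x y). Qed.
Lemma brZr c x z : br z (c *: x) = c *: br z x. Proof. exact: (linZ (br_linr z) c x). Qed.
Lemma brNr x z : br z (- x) = - br z x. Proof. exact: (linN (br_linr z) x). Qed.
Lemma br_sumr (I : Type) (r : seq I) (P : pred I) (F : I -> L) z :
  br z (\sum_(i <- r | P i) F i) = \sum_(i <- r | P i) br z (F i).
Proof. exact: (lin_sum (br_linr z)). Qed.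
Lemma phi0 : phi 0 = 0. Proof. exact: lin0 phi_lin. Qed.
Lemma phiZ c x : phi (c *: x) = c *: phi x. Proof. exact: (linZ phi_lin). Qed.
Lemma phi_sum (I : Type) (r : seq I) (P : pred I) (F : I -> L) :
  phi (\sum_(i <- r | P i) F i) = \sum_(i <- r | P i) phi (F i).
Proof. exact: (lin_sum phi_lin). Qed.
Lemma phi_inj : injective phi. Proof. exact: can_inj phiK. Qed.
Lemma phiinv_lin : linear phiinv.
Proof. by move=> c x y; apply: phi_inj; rewrite phiinvK phi_lin !phiinvK. Qed.
Lemma phiinv_br x y : phiinv (br x y) = br (phiinv x) (phiinv y).
Proof. by apply: phi_inj; rewrite phiinvK phi_br !phiinvK. Qed.

Lemma gr_subspace g : subspace (gr g). Proof. by case: graded_L => h _; apply: h. Qed.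
Lemma gr0 g : gr g 0. Proof. exact: subspace0 (gr_subspace g). Qed.

Lemma gr_decomp v : exists n (g : 'I_n -> G) (x : 'I_n -> L),
  injective g /\ (forall i, gr (g i) (x i)) /\ v = \sum_(i < n) x i.
Proof. by case: graded_L => _ [h _]; apply: h. Qed.

Lemma gr_decomp_uniq n (g : 'I_n -> G) (x : 'I_n -> L) : injective g ->
  (forall i, gr (g i) (x i)) -> \sum_(i < n) x i = 0 -> forall i, x i = 0.
Proof. by case: graded_L => _ [_ h]; apply: h. Qed.

Lemma homog_components0 (I : finType) (g : I -> G) (x : I -> L) :
  (forall i, gr (g i) (x i)) -> \sum_i x i = 0 ->
  forall d, \sum_(i | g i == d) x i = 0.
Proof.
move=> hx hs d; set D := undup (map g (enum I)).
have uD : uniq D by rewrite undup_uniq.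
pose y d := \sum_(i | g i == d) x i.
have hy e : gr e (y e) by apply: (subspace_sum (gr_subspace e)) => i /eqP <-.
have hinj : injective (fun j : 'I_(size D) => nth 0 D j).
  by move=> j k /= e; apply: val_inj; apply: (uniqP 0 uD) e; rewrite inE.
have hs' : \sum_(j < size D) y (nth 0 D j) = 0.
  by rewrite -{}[RHS]hs (sum_by_value g x) [RHS](big_nth 0) big_mkord.
have := gr_decomp_uniq hinj (fun j => hy _) hs'.
case: (boolP (d \in D)) => hd.
  have hi : (index d D < size D)%N by rewrite index_mem.
  by move=> /(_ (Ordinal hi)); rewrite /= nth_index.
move=> _; apply: big_pred0 => i; apply/negbTE; apply: contra hd => /eqP <-.
by rewrite mem_undup map_f ?mem_enum.
Qed.

Lemma homog_component_off (I : finType) (g : I -> G) (x : I -> L) v d0 :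
  gr d0 v -> (forall i, gr (g i) (x i)) -> v = \sum_i x i ->
  forall d, d != d0 -> \sum_(i | g i == d) x i = 0.
Proof.
move=> hv hx hvs d hd.
pose g' (i : I + unit) := if i is inl j then g j else d0.
pose x' (i : I + unit) := if i is inl j then x j else - v.
have hx' i : gr (g' i) (x' i).
  by case: i => [j|_] /=; [exact: hx | exact: subspaceN (gr_subspace _) _ hv].
have hs : \sum_i x' i = 0.
  by rewrite big_sumType /= -hvs (big_pred1 tt) ?subrr //; case.
have := homog_components0 hx' hs d; rewrite big_sumType /=.
by rewrite [X in _ + X]big_pred0 ?addr0 // => u; rewrite eq_sym (negbTE hd).
Qed.

Lemma eps_neq0 g1 g2 : eps g1 g2 != 0. Proof. by case: eps_bichar. Qed.
Lemma eps_mulC g1 g2 : eps g1 g2 * eps g2 g1 = 1. Proof. by case: eps_bichar => _ []. Qed.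

Lemma eps0l g : eps 0 g = 1.
Proof.
case: eps_bichar => _ [_ [_ h]]; apply: (mulfI (eps_neq0 0 g)).
by rewrite mulr1 -h addr0.
Qed.

Lemma eps0r g : eps g 0 = 1.
Proof.
case: eps_bichar => _ [_ [h _]]; apply: (mulfI (eps_neq0 g 0)).
by rewrite mulr1 -h addr0.
Qed.

Lemma H_subspace : subspace H. Proof. by case: hmax => [[[]]]. Qed.
Lemma H_graded : graded_subspace grading H. Proof. by case: hmax => [[]]. Qed.
Lemma H_abelian x y : H x -> H y -> br x y = 0. Proof. by case: hmax => _ [h _]; apply: h. Qed.
Lemma H_phi x : H x -> H (phi x). Proof. by case: hmax => [[_ [_ [h _]]] _]; apply: h. Qed.
Lemma H_phiinv y : H y -> H (phiinv y).
Proof. by case: hmax => [[_ [_ [_ h]]] _] /h [x [hx <-]]; rewrite phiK. Qed.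

Lemma H0_subspace : subspace H_0.
Proof.
have [H0 hH] := H_subspace; have [g0 hg] := gr_subspace 0.
by split=> // c x y [hx gx] [hy gy]; split; [apply: hH | apply: hg].
Qed.

Lemma H0_phi h : H_0 h -> H_0 (phi h).
Proof. by case=> hh gh; split; [apply: H_phi | apply: phi_graded]. Qed.

Lemma H0_phiinv h : H_0 h -> H_0 (phiinv h).
Proof.
case=> hh gh; split; first exact: H_phiinv.
have [n [g [x [ig [hx ex]]]]] := proj2 H_graded _ (H_phiinv hh).
have hphi : h = \sum_(i < n) phi (x i) by rewrite -phi_sum -ex phiinvK.
have x0 i : g i != 0 -> x i = 0.
  move=> hgi; apply: phi_inj; rewrite phi0.
  have := homog_component_off gh (fun i => phi_graded (proj1 (hx i))) hphi hgi.
  by rewrite (big_pred1 i) // => j; rewrite /= (inj_eq ig).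
rewrite ex; apply: (subspace_sum (gr_subspace 0)) => i _.
by case: (eqVneq (g i) 0) => [<-|/x0 ->]; [case: (hx i) | exact: gr0].
Qed.

Lemma H0_iter_phiinv n h : H_0 h -> H_0 (iter n phiinv h).
Proof. by elim: n => //= n IH /IH /H0_phiinv. Qed.

Lemma ws_eqH0 a b v : eqh a b -> WS a v -> WS b v.
Proof. by move=> e hv h hh; rewrite -e // hv. Qed.

Lemma ws_subspace a : subspace (WS a).
Proof.
split=> [h _|c x y hx hy h hh]; first by rewrite br0r phi0 scaler0.
by rewrite (br_linr h) hx // hy // phi_lin scalerDr !scalerA mulrC.
Qed.

Lemma ws_homog_decomp a v : WS a v -> exists n (g : 'I_n -> G) (x : 'I_n -> L),
  (forall i, gr (g i) (x i) /\ WS a (x i)) /\ v = \sum_(i < n) x i.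
Proof.
move=> hv; have [n [g [x [ig [hx ev]]]]] := gr_decomp v.
exists n, g, x; split=> // i; split=> // h hh.
pose z j := br h (x j) - a h *: phi (x j).
have hz j : gr (g j) (z j).
  apply: (subspaceD (gr_subspace _)); first by rewrite -[g j]add0r; apply: br_graded (proj2 hh) _.
  by apply: (subspaceN (gr_subspace _)); apply: (subspaceZ (gr_subspace _)); apply: phi_graded.
have sz : \sum_(j < n) z j = 0.
  by rewrite big_split /= -br_sumr sumrN -scaler_sumr -phi_sum -ev hv // subrr.
by apply/eqP; rewrite -subr_eq0; apply/eqP; apply: gr_decomp_uniq ig hz sz i.
Qed.

Lemma ws_ind a (P : L -> Prop) : subspace P ->
  (forall g x, gr g x -> WS a x -> P x) -> forall x, WS a x -> P x.
Proof.
move=> hP hh x /ws_homog_decomp [n [g [y [hy ->]]]].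
by apply: (subspace_sum hP) => i _; case: (hy i); apply: hh.
Qed.

Lemma ws_phi a v : WS a v -> WS (rph a 1) (phi v).
Proof. by move=> hv h hh; rewrite -{1}(phiinvK h) -phi_br hv ?phiZ //; apply: H0_phiinv. Qed.

Lemma ws_phiinv a v : WS a v -> WS (a \o phi) (phiinv v).
Proof.
by move=> hv h hh; apply: phi_inj; rewrite phi_br phiinvK hv ?phiZ ?phiinvK //; apply: H0_phi.
Qed.

Lemma ws_H v : H v -> WS (fun=> 0) v.
Proof. by move=> hv h [hh _]; rewrite H_abelian // scale0r. Qed.

Definition br_root (a b : L -> K) : L -> K := rph (fun h => a h + b h) 1.

(* Jacobi with z := phi^-1 h in H_0, where eps (0, _) = eps (_, 0) = 1 *)
Lemma ws_br_homog a b gx gy x y : gr gx x -> gr gy y -> WS a x -> WS b y ->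
  WS (br_root a b) (br x y).
Proof.
move=> gx_ gy_ hx hy h hh; rewrite /br_root /rphi /=.
have hh' := H0_phiinv hh.
have J := br_jacobi (proj2 hh') gx_ gy_.
rewrite phiinvK eps0r eps0l !scale1r in J.
rewrite (br_skew gy_ (proj2 hh')) eps0r scale1r (hy _ hh') (hx _ hh') in J.
rewrite brNr !brZr (br_skew (phi_graded gy_) (phi_graded gx_)) in J.
rewrite phi_br; set P := br (phi x) (phi y) in J *.
rewrite scalerN scalerA scalerN scalerA mulrCA eps_mulC mulr1 in J.
by apply/eqP; rewrite -subr_eq0 -J scalerDl opprD addrA addrAC.
Qed.

Lemma ws_br a b x y : WS a x -> WS b y -> WS (br_root a b) (br x y).
Proof.
have hS := ws_subspace (br_root a b).
move=> hx hy; move: x hx; apply: ws_ind.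
  by apply: subspace_preim hS; apply: br_linl.
move=> gx x gx_ hx; move: y hy; apply: ws_ind.
  by apply: subspace_preim hS; apply: br_linr.
by move=> gy y gy_ hy; apply: ws_br_homog gx_ gy_ hx hy.
Qed.

Lemma eqh_sym a b : eqh a b -> eqh b a. Proof. by move=> e h hh; rewrite e. Qed.
Lemma eqh_trans a b c : eqh a b -> eqh b c -> eqh a c.
Proof. by move=> e1 e2 h hh; rewrite e1 // e2. Qed.

Section RootClasses.
Variables (n : nat) (a : 'I_n -> L -> K).

Definition same_root (j i : 'I_n) : bool := `[< eqh (a j) (a i) >].

Definition root_reps := [pred i : 'I_n | [forall j, same_root j i ==> (i <= j)%N]].
Definition root_rep (j : 'I_n) : 'I_n := [arg min_(k < j | same_root k j) (k : nat)].

Lemma same_root_refl i : same_root i i. Proof. exact/asboolP. Qed.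
Lemma same_root_sym i j : same_root i j = same_root j i.
Proof. by apply/asboolP/asboolP; apply: eqh_sym. Qed.
Lemma same_root_trans i j k : same_root i j -> same_root j k -> same_root i k.
Proof. by move=> /asboolP e1 /asboolP e2; apply/asboolP; apply: eqh_trans e1 e2. Qed.

Lemma root_reps_inj i i' : i \in root_reps -> i' \in root_reps -> same_root i i' -> i = i'.
Proof.
rewrite !inE => /forallP h1 /forallP h2 e; apply: val_inj; apply/eqP.
by rewrite eqn_leq (implyP (h1 i')) ?(implyP (h2 i)) // same_root_sym.
Qed.

Lemma root_repP j : root_rep j \in root_reps /\ same_root (root_rep j) j.
Proof.
rewrite /root_rep; case: arg_minnP; first exact: same_root_refl.
move=> k hk hmin; split=> //; rewrite inE; apply/forallP => j'; apply/implyP => e.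
by apply: hmin; apply: same_root_trans e hk.
Qed.

Lemma sum_by_root (x : 'I_n -> L) :
  \sum_j x j = \sum_(i in root_reps) \sum_(j | same_root j i) x j.
Proof.
under [RHS]eq_bigr do rewrite big_mkcond.
rewrite exchange_big /=; apply: eq_bigr => j _.
rewrite -big_mkcondr (big_pred1 (root_rep j)) // => i /=.
have [r1 r2] := root_repP j.
apply/andP/eqP => [[hi e]|->]; last by rewrite same_root_sym.
rewrite same_root_sym in e.
by apply: root_reps_inj hi r1 (same_root_trans e _); rewrite same_root_sym.
Qed.

Lemma ws_sum_same_root (x : 'I_n -> L) i : (forall j, WS (a j) (x j)) ->
  WS (a i) (\sum_(j | same_root j i) x j).
Proof.
move=> hx; apply: (subspace_sum (ws_subspace _)) => j /asboolP e.
exact: ws_eqH0 e (hx j).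
Qed.

(* [split_alg] gives uniqueness only for pairwise distinct roots, hence the grouping *)
Lemma root_decomp_uniq (x : 'I_n -> L) h : H h ->
  (forall i, Lam (a i) /\ WS (a i) (x i)) -> h + \sum_(i < n) x i = 0 ->
  h = 0 /\ forall i, \sum_(j | same_root j i) x j = 0.
Proof.
move=> hh hx hs.
pose y i := \sum_(j | same_root j i) x j.
pose a' (k : 'I_#|root_reps|) := a (enum_val k).
pose x' (k : 'I_#|root_reps|) := y (enum_val k).
have hx' k : Lam (a' k) /\ WS (a' k) (x' k).
  by split; [case: (hx (enum_val k)) | apply: ws_sum_same_root => j; case: (hx j)].
have hd k k' : k != k' -> ~ eqh (a' k) (a' k').
  move=> hkk e; move: hkk; rewrite -(inj_eq enum_val_inj).
  by rewrite (root_reps_inj (enum_valP k) (enum_valP k')) ?eqxx //; apply/asboolP.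
have hs' : h + \sum_(k < #|root_reps|) x' k = 0.
  by rewrite -big_enum_val -[X in _ = X]hs (sum_by_root x).
have [h0 x0] := proj2 hsplit h _ a' x' hh hx' hd hs'.
split=> // i; have [r1 r2] := root_repP i.
have -> : \sum_(j | same_root j i) x j = y (root_rep i).
  apply: eq_bigl => j; apply/idP/idP => e; last exact: same_root_trans e r2.
  by apply: same_root_trans e _; rewrite same_root_sym.
by have := x0 (enum_rank_in r1 (root_rep i)); rewrite /x' enum_rankK_in.
Qed.

End RootClasses.

Lemma rph1_eqh a b : eqh (rph a 1) (rph b 1) <-> eqh a b.
Proof.
split=> e h hh; last by rewrite /rphi /= e //; apply: H0_phiinv.
by have := e _ (H0_phi hh); rewrite /rphi /= phiK.
Qed.

Lemma Lam_eqh a b : eqh a b -> Lam a -> Lam b.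
Proof.
move=> e [lin [[h [hh nz]] [v [nv hv]]]]; split; last split.
- move=> c h1 h2 hh1 hh2; rewrite -!e //; first exact: lin.
  by case: H0_subspace => _; apply.
- by exists h; rewrite -e.
by exists v; split=> //; apply: ws_eqH0 hv.
Qed.

Lemma Lam_rph1 a : Lam a -> Lam (rph a 1).
Proof.
move=> [lin [[h [hh nz]] [v [nv hv]]]]; split; last split.
- by move=> c h1 h2 hh1 hh2; rewrite /rphi /= phiinv_lin; apply: lin; apply: H0_phiinv.
- by exists (phi h); split; [apply: H0_phi | rewrite /rphi /= phiK].
exists (phi v); split; last exact: ws_phi.
by apply: contra nv => /eqP e; apply/eqP; apply: phi_inj; rewrite e phi0.
Qed.

(* for h0 in H_0 with a h0 != 0, ad h0 multiplies L_a by a h0 and moves it to L_(a phi^-1);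
   on a weight-0 vector the sum of these is 0, so each grouped component vanishes *)
Lemma ws0_H v : WS (fun=> 0) v -> H v.
Proof.
move=> hv; have [h [n [a [x [hh [hx ev]]]]]] := proj1 hsplit v.
suff: \sum_i x i = 0 by rewrite ev => ->; rewrite addr0.
rewrite (sum_by_root a x); apply: big1 => i _.
have [_ [[h0 [hh0 nz]] _]] := proj1 (hx i).
pose z j := a j h0 *: phi (x j).
have hz j : Lam (rph (a j) 1) /\ WS (rph (a j) 1) (z j).
  split; first exact: Lam_rph1 (proj1 (hx j)).
  by apply: (subspaceZ (ws_subspace _)); apply: ws_phi; case: (hx j).
have sz : 0 + \sum_j z j = 0.
  have es : \sum_j x j = v - h by rewrite ev addrC addKr.
  rewrite add0r (eq_bigr (fun j => br h0 (x j))) => [|j _]; last by rewrite (proj2 (hx j)).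
  by rewrite -br_sumr es brDr brNr (hv _ hh0) (H_abelian (proj1 hh0) hh) scale0r subr0.
have [_ /(_ i)] := root_decomp_uniq (proj1 H_subspace) hz sz.
have -> : \sum_(j | same_root (fun j => rph (a j) 1) j i) z j =
          a i h0 *: phi (\sum_(j | same_root a j i) x j).
  rewrite phi_sum scaler_sumr; apply: eq_big => [j|j /asboolP /rph1_eqh e].
    by apply/asboolP/asboolP => e; apply/rph1_eqh.
  by rewrite /z (e _ hh0).
move=> /eqP; rewrite scaler_eq0 (negbTE nz) /= => /eqP hy.
by apply: phi_inj; rewrite hy phi0.
Qed.

Lemma ws_opp_br_H a x y : WS a x -> WS (oppf a) y -> H (br x y).
Proof.
move=> hx hy; apply: ws0_H; apply: ws_eqH0 (ws_br hx hy) => h _.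
by rewrite /br_root /rphi /oppf /= subrr.
Qed.

Lemma rphS a n h : rph a n.+1 h = rph (rph a n) 1 h.
Proof. by rewrite /rphi /= -iterSr. Qed.

Lemma rphSr a n h : rph a n.+1 h = rph a n (phiinv h).
Proof. by rewrite /rphi iterSr. Qed.

Lemma Lam_rph a n : Lam a -> Lam (rph a n).
Proof.
move=> ha; elim: n => [|n IH]; first by apply: (Lam_eqh _ ha) => h _.
by apply: (Lam_eqh _ (Lam_rph1 IH)) => h _; rewrite [RHS]rphS.
Qed.

Lemma Lam_phi a : Lam a -> Lam (a \o phi).
Proof.
move=> [lin [[h [hh nz]] [v [nv hv]]]]; split; last split.
- by move=> c h1 h2 hh1 hh2 /=; rewrite phi_lin; apply: lin; apply: H0_phi.
- by exists (phiinv h); split; [apply: H0_phiinv | rewrite /= phiinvK].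
exists (phiinv v); split; last exact: ws_phiinv.
by apply: contra nv => /eqP e; apply/eqP; rewrite -[v]phiinvK e; apply: phi0.
Qed.

Lemma Lam_sign (e : K) a n : e = 1 \/ e = -1 -> Lam a -> Lam (fun h => e * rph a n h).
Proof.
move=> he ha; have hr := Lam_rph n ha.
by case: he => ->; [apply: (Lam_eqh _ hr) | apply: (Lam_eqh _ (hsym hr))] => h _;
  rewrite ?mul1r ?mulN1r.
Qed.

(** * Connections *)

Local Notation orb := (in_orbit phiinv grading H).
Local Notation pmorb := (in_pm_orbit phiinv grading H).
Local Notation ps := (psum phiinv).
Local Notation conn := (connected br phi phiinv grading H).

Lemma pm_orbitP c b : pmorb c b <->
  exists m (e : K), (e = 1 \/ e = -1) /\ eqh c (fun h => e * rph b m h).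
Proof.
split=> [[m [] E] | [m [e [[] -> E]]]]; exists m.
- by exists 1; split; [left | move=> h hh; rewrite mul1r E].
- by exists (-1); split; [right | move=> h hh; rewrite mulN1r E].
- by left=> h hh; rewrite E // mul1r.
by right=> h hh; rewrite E // mulN1r.
Qed.

Lemma pm_orbit_eqh c c' b : eqh c c' -> pmorb c b -> pmorb c' b.
Proof. by move=> e [m [E|E]]; exists m; [left|right]; apply: eqh_trans (eqh_sym e) E. Qed.

Lemma psum0 s h : ps s 0 h = s 1%N h.
Proof. by rewrite /psum big_geq // addr0. Qed.

Lemma psumS s i h : ps s i.+1 h = ps s i (phiinv h) + s i.+2 (phiinv h).
Proof.
rewrite /psum big_nat_recr //= rphSr addrA; congr (_ + _ + _); last by rewrite subSnn.
rewrite !big_nat; apply: eq_bigr => j /andP [_ hj].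
by rewrite subSn ?rphSr //; apply: ltnW.
Qed.

Lemma psum_ext s t i : (forall j, (1 <= j <= i.+1)%N -> forall h, s j h = t j h) ->
  forall h, ps s i h = ps t i h.
Proof.
move=> e h; rewrite /psum /rphi e //; congr (_ + _).
rewrite !big_nat; apply: eq_bigr => j /andP [h1 h2]; rewrite e //.
by rewrite (leq_trans _ h1).
Qed.

Lemma psum_shift (e : K) r s i h :
  ps (fun j h => e * rph (s j) r h) i h = e * rph (ps s i) r h.
Proof.
have iterC q (h' : L) : iter r phiinv (iter q phiinv h') = iter q phiinv (iter r phiinv h').
  by rewrite -!iterD addnC.
rewrite /psum /rphi mulrDr mulr_sumr iterC; congr (_ + _).
by apply: eq_bigr => j _; rewrite iterC.
Qed.

Lemma psum_track (u Q : nat -> L -> K) i0 N :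
  eqh (ps u i0) (Q 0%N) ->
  (forall i, (i < N)%N -> eqh (Q i.+1) (rph (fun h => Q i h + u (i0 + i).+2 h) 1)) ->
  forall i, (i <= N)%N -> eqh (ps u (i0 + i)) (Q i).
Proof.
move=> h0 hs; elim=> [|i IH] hi; first by rewrite addn0.
move=> h hh; rewrite addnS psumS (hs i hi h hh) /rphi /=.
by rewrite IH ?(ltnW hi) //; apply: H0_phiinv.
Qed.

(* [connected] with its case k = 1 folded into the general one *)
Definition chain (a b : L -> K) k (s : nat -> L -> K) :=
  [/\ (1 <= k)%N, (forall j, (1 <= j <= k)%N -> Lam (s j)), orb (s 1%N) a,
      (forall i, (1 <= i <= k - 2)%N -> Lam (ps s i)) & pmorb (ps s (k - 1)) b].

Lemma connectedP a b : conn a b <-> exists k s, chain a b k s.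
Proof.
split=> [[k [s [hk [hs HH]]]] | [k [s [hk hs o hi p]]]]; exists k, s.
  case: eqP HH => [ek [o p] | _ [o [hi p]]]; last by split.
  subst k; split=> //; first by move=> i /andP [h1 h2]; have := leq_trans h1 h2.
  by apply: pm_orbit_eqh p => h _; rewrite psum0.
do 2!split=> //; case: eqP => [ek|_] //; subst k; split=> //.
by apply: pm_orbit_eqh p => h _; rewrite psum0.
Qed.

Lemma connected1 c a b : Lam c -> orb c a -> pmorb c b -> conn a b.
Proof.
move=> hc o p; apply/connectedP; exists 1%N, (fun=> c); split=> //.
  by move=> i /andP [h1 h2]; have := leq_trans h1 h2.
by apply: pm_orbit_eqh p => h _; rewrite psum0.
Qed.

Lemma connected_refl a : Lam a -> conn a a.
Proof. by move=> ha; apply: (connected1 ha); exists 0%N; [|left] => h _. Qed.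

Lemma connected_eqh a a' : Lam a -> eqh a a' -> conn a' a /\ conn a a'.
Proof.
move=> ha e; split; apply: (connected1 ha).
- by exists 0%N.
- by exists 0%N; left=> h _.
- by exists 0%N => h _.
by exists 0%N; left.
Qed.

Lemma connected_rph a n : Lam a -> conn (rph a n) a.
Proof.
by move=> ha; apply: (connected1 (Lam_rph n ha)); [exists 0%N | exists n; left] => h _.
Qed.

Lemma connected_phi a : Lam a -> conn (a \o phi) a.
Proof.
move=> ha; apply: (connected1 ha); [exists 1%N | exists 0%N; left] => h _ //.
by rewrite /rphi /= phiinvK.
Qed.

Lemma connected_opp a : Lam a -> conn a (oppf a).
Proof.
move=> ha; apply: (connected1 ha); [exists 0%N | exists 0%N; right] => h _ //.
by rewrite /rphi /oppf /= opprK.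
Qed.

Lemma connected_br_root a b : Lam a -> Lam b -> conn a (br_root a b).
Proof.
move=> ha hb; apply/connectedP.
exists 2%N, (fun j => if j == 1%N then a else b); split=> //.
- by move=> j _; case: (j == 1%N).
- by exists 0%N => h _.
- by move=> i /andP [h1 h2]; have := leq_trans h1 h2.
by exists 0%N; left=> h _; rewrite /= psumS psum0.
Qed.

Lemma sign_sqr (e : K) : e = 1 \/ e = -1 -> e * e = 1.
Proof. by case=> ->; rewrite ?mulr1 ?mulrNN ?mulr1. Qed.

(* reverse the chain: t_1 = beta phi^-m and t_j = -e s_(k-j+2) phi^-(2j-3) *)
Lemma connected_sym a b : Lam b -> conn a b -> conn b a.
Proof.
move=> hb /connectedP [k [s [hk hs [n o] hi /pm_orbitP [m [e [he p]]]]]].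
have hee := sign_sqr he.
have hne : - e = 1 \/ - e = -1 by case: he => ->; [right | left; rewrite opprK].
pose t j := if j == 1%N then rph b m
            else (fun h => - e * rph (s (k - j + 2)%N) (2 * j - 3) h).
pose Q i := fun h => e * rph (ps s (k - 1 - i)) (2 * i) h.
have tr : forall i, (i <= k - 1)%N -> eqh (ps t (0 + i)) (Q i).
  apply: psum_track => [h hh | i ilt h hh].
    by rewrite psum0 /Q /= subn0 /rphi /= (p _ hh) mulrA hee mul1r.
  rewrite /Q /t (_ : (i.+2 == 1%N) = false) // /rphi [iter 1 _ _]/=.
  have -> : (k - 1 - i = (k - 1 - i.+1).+1)%N by lia.
  have -> : (k - i.+2 + 2 = (k - 1 - i.+1).+2)%N by lia.
  have -> : (2 * i.+2 - 3 = (2 * i).+1)%N by lia.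
  have -> : (2 * i.+1 = (2 * i).+2)%N by lia.
  by rewrite psumS -!iterSr -iterS mulNr -mulrN -mulrDr addrK.
apply/connectedP; exists k, t; split=> //.
- move=> j /andP [h1 h2]; rewrite /t; case: eqP => [_|nj]; first exact: Lam_rph.
  by apply: Lam_sign => //; apply: hs; apply/andP; split; lia.
- by exists m => h _.
- move=> i /andP [h1 h2]; apply: (Lam_eqh (eqh_sym (tr i _))); first lia.
  by apply: Lam_sign => //; apply: hi; apply/andP; split; lia.
have := tr (k - 1)%N (leqnn _); rewrite add0n => E.
apply/pm_orbitP; exists (n + 2 * (k - 1))%N, e; split=> // h hh.
by rewrite (E _ hh) /Q subnn /rphi psum0 (o _ (H0_iter_phiinv _ hh)) /rphi iterD.
Qed.

(* concatenate the chains, the first one shifted by phi^-n2 and the second one by +-phi^-m1 *)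
Lemma connected_trans a b c : conn a b -> conn b c -> conn a c.
Proof.
move=> /connectedP [k [s [hk hs [n1 o1] hi1 /pm_orbitP [m1 [e1 [he1 p1]]]]]].
move=> /connectedP [l [t [hl ht [n2 o2] hi2 /pm_orbitP [m2 [e2 [he2 p2]]]]]].
pose u j := if (j <= k)%N then (fun h => 1 * rph (s j) n2 h)
            else (fun h => e1 * rph (t (j - k).+1) m1 h).
pose Q i := fun h => e1 * rph (ps t i) m1 h.
have lo i : (i <= k - 1)%N -> forall h, ps u i h = 1 * rph (ps s i) n2 h.
  move=> hi h; rewrite -psum_shift; apply: psum_ext => j /andP [_ hj] h'.
  by rewrite /u (_ : (j <= k)%N = true) //; lia.
have tr : forall i, (i <= l - 1)%N -> eqh (ps u (k - 1 + i)) (Q i).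
  apply: psum_track => [h hh | i ilt h hh].
    rewrite lo // mul1r /Q /rphi psum0 (p1 _ (H0_iter_phiinv _ hh)).
    by rewrite (o2 _ (H0_iter_phiinv _ hh)) /rphi -!iterD addnC.
  rewrite /Q -!psum_shift psumS /u (_ : (k - 1 + i).+2 <= k = false)%N; last by lia.
  by rewrite (_ : ((k - 1 + i).+2 - k).+1 = i.+2)%N ?psum_shift //; lia.
apply/connectedP; exists (k + l - 1)%N, u; split.
- lia.
- move=> j /andP [h1 h2]; rewrite /u; case: leqP => hj.
    by apply: Lam_sign; [left | apply: hs; apply/andP; split].
  by apply: Lam_sign => //; apply: ht; apply/andP; split; lia.
- exists (n1 + n2)%N => h hh.
  by rewrite /u (_ : (1 <= k)%N = true) // mul1r /rphi (o1 _ (H0_iter_phiinv _ hh)) /rphi iterD.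
- move=> i /andP [h1 h2]; case: (leqP i (k - 2)) => hik.
    apply: (Lam_eqh _ (Lam_sign n2 (or_introl erefl) (hi1 i _))).
      by move=> h _; rewrite lo //; lia.
    by apply/andP; split.
  have -> : i = (k - 1 + (i - (k - 1)))%N by lia.
  apply: (Lam_eqh (eqh_sym (tr _ _))); first lia.
  apply: Lam_sign => //; case: (eqVneq (i - (k - 1)) 0)%N => [->|nz].
    by apply: (Lam_eqh _ (ht 1%N _)) => [h _|]; rewrite ?psum0 //; apply/andP; split.
  by apply: hi2; apply/andP; split; lia.
have := tr (l - 1)%N (leqnn _).
rewrite (_ : k - 1 + (l - 1) = k + l - 1 - 1)%N; last by lia.
move=> E; apply/pm_orbitP; exists (m2 + m1)%N, (e1 * e2); split.
  by case: he1 => ->; case: he2 => ->; rewrite ?mul1r ?mulN1r ?opprK; auto.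
move=> h hh; rewrite (E _ hh) /Q /rphi (p2 _ (H0_iter_phiinv _ hh)) /rphi iterD.
by rewrite mulrA.
Qed.

Lemma br_root_linear a b : Lam a -> Lam b -> linear_on_H0 grading H (br_root a b).
Proof.
move=> [la _] [lb _] c h1 h2 hh1 hh2; rewrite /br_root /rphi /= phiinv_lin.
have p1 := H0_phiinv hh1; have p2 := H0_phiinv hh2.
by rewrite la // lb // mulrDr addrACA.
Qed.

Lemma br_ws_cases a b x y : Lam a -> Lam b -> WS a x -> WS b y ->
  [\/ br x y = 0, eqh b (oppf a) |
      Lam (br_root a b) /\ WS (br_root a b) (br x y)].
Proof.
move=> ha hb hx hy.
have [ne|nab] := pselect (eqh b (oppf a)); first by constructor 2.
have [->|nz] := eqVneq (br x y) 0; first by constructor 1.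
constructor 3; split; last exact: ws_br.
split; first exact: br_root_linear.
split; last by exists (br x y); split=> //; apply: ws_br.
have [h [hh nh]] : exists h, H_0 h /\ a h + b h != 0.
  apply: contrapT => nex; apply: nab => h hh; apply/eqP; rewrite -addr_eq0 addrC.
  by apply/negPn/negP => nh; apply: nex; exists h.
by exists (phi h); split; [apply: H0_phi | rewrite /br_root /rphi /= phiK].
Qed.

Lemma connected_br_root_r a b : Lam a -> Lam b -> Lam (br_root a b) ->
  conn b (br_root a b).
Proof.
move=> ha hb hab.
have e : eqh (br_root b a) (br_root a b) by move=> h _; rewrite /br_root /rphi /= addrC.
apply: connected_trans (connected_br_root hb ha) (proj2 (connected_eqh _ e)).
exact: Lam_eqh (eqh_sym e) hab.
Qed.

Lemma br_ws_disconnected a b x y : Lam a -> Lam b -> ~ conn a b ->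
  WS a x -> WS b y -> br x y = 0.
Proof.
move=> ha hb nab hx hy; case: (br_ws_cases ha hb hx hy) => [//|e|[hab _]]; case: nab.
  exact: connected_trans (connected_opp ha) (proj2 (connected_eqh (hsym ha) (eqh_sym e))).
exact: connected_trans (connected_br_root ha hb) (connected_sym hab (connected_br_root_r ha hb hab)).
Qed.

(* Jacobi: [z, [x, y]] expands into [y, z] and [z, x], both killed by br_ws_disconnected *)
Lemma br_opp_ws_disconnected_homog a b gx gy x y z : Lam a -> Lam b -> ~ conn a b ->
  gr gx x -> gr gy y -> WS a x -> WS (oppf a) y -> WS b z ->
  br z (br x y) = 0 /\ br (br x y) z = 0.
Proof.
move=> ha hb nab gx_ gy_ hx hy.
have hbp := Lam_phi hb.
have h1 z' : WS (b \o phi) z' -> br (phi z') (br x y) = 0.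
  move: z'; apply: ws_ind.
    by apply: subspace_ker => c u v; rewrite phi_lin (br_linl (br x y)).
  move=> gz z' gz_ hz; have J := br_jacobi gx_ gy_ gz_.
  have e1 : br y z' = 0.
    apply: (br_ws_disconnected (hsym ha) hbp) hy hz => c; apply: nab.
    exact: connected_trans (connected_opp ha) (connected_trans c (connected_phi hb)).
  have e2 : br z' x = 0.
    apply: (br_ws_disconnected hbp ha) hz hx => c; apply: nab.
    exact: connected_sym ha (connected_trans (connected_sym hb (connected_phi hb)) c).
  rewrite e1 e2 !br0r !scaler0 !add0r in J.
  by move: J => /eqP; rewrite scaler_eq0 (negbTE (eps_neq0 _ _)) => /eqP.
have h2 z' : WS b z' -> br z' (br x y) = 0.
  by move=> hz; rewrite -(phiinvK z'); apply: h1; apply: ws_phiinv.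
move=> hz; split; first exact: h2.
move: z hz; apply: ws_ind; first exact: subspace_ker (br_linr _).
by move=> gz z gz_ hz; rewrite (br_skew (br_graded gx_ gy_) gz_) h2 // scaler0 oppr0.
Qed.

Lemma br_opp_ws_disconnected a b x y z : Lam a -> Lam b -> ~ conn a b ->
  WS a x -> WS (oppf a) y -> WS b z -> br z (br x y) = 0 /\ br (br x y) z = 0.
Proof.
move=> ha hb nab hx hy hz.
have hS (f : L -> L) : linear f -> subspace (fun v => br z (f v) = 0 /\ br (f v) z = 0).
  move=> f_lin; split=> [|c v w [v1 v2] [w1 w2]]; first by rewrite lin0 // br0l br0r.
  by rewrite f_lin (br_linr z) (br_linl z) v1 v2 w1 w2 scaler0 addr0.
move: x hx; apply: ws_ind; first exact: hS (br_linl y).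
move=> gx x gx_ hx; move: y hy; apply: ws_ind; first exact: hS (br_linr x).
by move=> gy y gy_ hy; apply: br_opp_ws_disconnected_homog gx_ gy_ hx hy hz.
Qed.

(** * The ideals I_[a] *)

Local Notation inCl := (inClass br phi phiinv grading H).
Local Notation HL := (HLam br phi phiinv grading H).
Local Notation VL := (VLam br phi phiinv grading H).
Local Notation LL := (LLam br phi phiinv grading H).
Local Notation VLgen a := (fun b x => inCl a b /\ WS b x).

Lemma inClass_connected a b : Lam b -> conn a b -> forall c, inCl a c <-> inCl b c.
Proof.
move=> hb ab c; split=> -[hc ca]; split=> //; first exact: connected_trans ca ab.
exact: connected_trans ca (connected_sym hb ab).
Qed.

Lemma inClass_disconnected a b c d : Lam a -> inCl a c -> inCl b d ->
  ~ conn a b -> ~ conn c d.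
Proof.
move=> ha [hc ca] [hd db] nab cd; apply: nab.
exact: connected_trans (connected_sym ha ca) (connected_trans cd db).
Qed.

Lemma inClass_rph1 a b : inCl a b -> inCl a (rph b 1).
Proof. by case=> hb ba; split; [apply: Lam_rph1 | apply: connected_trans ba; apply: connected_rph]. Qed.

Lemma inClass_phi a b : inCl a b -> inCl a (b \o phi).
Proof. by case=> hb ba; split; [apply: Lam_phi | apply: connected_trans ba; apply: connected_phi]. Qed.

Lemma HLam_gen a b x y : inCl a b -> WS b x -> WS (oppf b) y -> HL a (br x y).
Proof. by move=> hb hx hy; apply: span_gen; exists b, x, y. Qed.

Lemma VLam_gen a b x : inCl a b -> WS b x -> VL a x.
Proof. by move=> hb hx; apply: (fsum_of_gen (VLgen a) b). Qed.

Lemma VLam_subspace a : subspace (VL a).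
Proof.
apply: (fsum_of_subspace (VLgen a) (fun _ b => b)) => c b x [hb hx].
by split=> //; apply: (subspaceZ (ws_subspace b)).
Qed.

Lemma LLam_subspace a : subspace (LL a).
Proof.
have [H0 hH] := span_subspace
  (fun w => exists b x y, inCl a b /\ WS b x /\ WS (oppf b) y /\ w = br x y).
have [V0 hV] := VLam_subspace a.
split; first by exists 0, 0; rewrite addr0.
move=> c _ _ [h1 [w1 [hh1 [hw1 ->]]]] [h2 [w2 [hh2 [hw2 ->]]]].
exists (c *: h1 + h2), (c *: w1 + w2); do 2?split; [exact: hH | exact: hV |].
by rewrite scalerDr addrACA.
Qed.

Lemma HLam_LLam a v : HL a v -> LL a v.
Proof. by move=> hv; exists v, 0; rewrite addr0; split=> //; split=> //; apply: subspace0 (VLam_subspace a). Qed.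

Lemma VLam_LLam a v : VL a v -> LL a v.
Proof. by move=> hv; exists 0, v; rewrite add0r; split=> //; apply: subspace0 (span_subspace _). Qed.

Lemma LLam_ind a (P : L -> Prop) : subspace P ->
  (forall b x y, inCl a b -> WS b x -> WS (oppf b) y -> P (br x y)) ->
  (forall b x, inCl a b -> WS b x -> P x) -> forall v, LL a v -> P v.
Proof.
move=> hP h1 h2 _ [h [w [hh [hw ->]]]]; apply: (subspaceD hP).
  by apply: (span_ind hP) hh => _ [b [x [y [hb [hx [hy ->]]]]]]; apply: h1 hb hx hy.
by apply: (fsum_of_ind (VLgen a) _ hP) hw => b x [hb hx]; apply: h2 hb hx.
Qed.

Lemma LLam_homog a v : LL a v -> homog_sums grading (LL a) v.
Proof.
have hS := homog_sums_subspace gr_subspace (LLam_subspace a).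
move: v; apply: LLam_ind => //.
  move=> b u v hb hu hv; move: u hu v hv; apply: (ws_ind (P := fun u =>
    forall v, WS (oppf b) v -> homog_sums grading (LL a) (br u v))).
    split=> [v _|c u1 u2 h1 h2 v hv]; first by rewrite br0l; apply: subspace0 hS.
    by rewrite (br_linl v); case: hS => _; apply; [exact: h1 | exact: h2].
  move=> gx u gx_ hu; apply: ws_ind.
    by apply: subspace_preim hS; apply: br_linr.
  move=> gy v gy_ hv; apply: homog_sums_gen (br_graded gx_ gy_) _.
  exact: HLam_LLam (HLam_gen hb hu hv).
move=> b x hb /ws_homog_decomp [n [g [y [hy ->]]]].
apply: (subspace_sum hS) => i _; case: (hy i) => gy wy.
exact: homog_sums_gen gy (VLam_LLam (VLam_gen hb wy)).
Qed.

Lemma LLam_brH a z x : H z -> LL a x -> LL a (br x z).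
Proof.
move=> hz; move: x; apply: LLam_ind.
- by apply: subspace_preim (LLam_subspace a); apply: br_linl.
- move=> b u v hb hu hv; rewrite H_abelian //; first exact: subspace0 (LLam_subspace a).
  exact: ws_opp_br_H hu hv.
move=> b w hb hw; apply: VLam_LLam; apply: VLam_gen (inClass_rph1 hb) _.
by apply: ws_eqH0 (ws_br hw (ws_H hz)) => h _; rewrite /br_root /rphi /= addr0.
Qed.

Lemma LLam_br_ws a d z x : Lam d -> WS d z -> LL a x -> LL a (br x z).
Proof.
move=> hd hz; move: x; apply: LLam_ind.
- by apply: subspace_preim (LLam_subspace a); apply: br_linl.
- move=> b u v [hb ba] hu hv.
  have [bd|nbd] := pselect (conn b d); last first.
    by rewrite (proj2 (br_opp_ws_disconnected hb hd nbd hu hv hz)); apply: subspace0 (LLam_subspace a).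
  apply: VLam_LLam; apply: (VLam_gen (b := rph d 1)).
    split; first exact: Lam_rph1.
    exact: connected_trans (connected_rph 1 hd) (connected_trans (connected_sym hd bd) ba).
  by apply: ws_eqH0 (ws_br (ws_H (ws_opp_br_H hu hv)) hz) => h _; rewrite /br_root /rphi /= add0r.
move=> b w [hb ba] hw.
case: (br_ws_cases hb hd hw hz) => [->|e|[hX wX]]; first exact: subspace0 (LLam_subspace a).
  exact: HLam_LLam (HLam_gen (conj hb ba) hw (ws_eqH0 e hz)).
apply: VLam_LLam; apply: VLam_gen wX; split=> //.
exact: connected_trans (connected_sym hX (connected_br_root hb hd)) ba.
Qed.

Lemma LLam_ideal a : ideal br phi grading (LL a).
Proof.
split.
  apply: graded_subspace_of_homog_sums; [exact: gr_subspace | exact: LLam_subspace | exact: LLam_homog].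
split.
  move=> x y hx; have [h [n [d [z [hh [hz ->]]]]]] := proj1 hsplit y.
  rewrite brDr br_sumr; apply: (subspaceD (LLam_subspace a)); first exact: LLam_brH.
  by apply: (subspace_sum (LLam_subspace a)) => i _; case: (hz i) => h1 h2; apply: LLam_br_ws h1 h2 hx.
split.
  apply: LLam_ind; first exact: subspace_preim phi_lin (LLam_subspace a).
    move=> b u v hb hu hv; rewrite phi_br; apply: HLam_LLam.
    exact: HLam_gen (inClass_rph1 hb) (ws_phi hu) (ws_phi hv).
  by move=> b w hb hw; apply: VLam_LLam; apply: VLam_gen (inClass_rph1 hb) (ws_phi hw).
move=> y hy; exists (phiinv y); split; last exact: phiinvK.
move: y hy; apply: LLam_ind; first exact: subspace_preim phiinv_lin (LLam_subspace a).
  move=> b u v hb hu hv; rewrite phiinv_br; apply: HLam_LLam.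
  exact: HLam_gen (inClass_phi hb) (ws_phiinv hu) (ws_phiinv hv).
by move=> b w hb hw; apply: VLam_LLam; apply: VLam_gen (inClass_phi hb) (ws_phiinv hw).
Qed.

Lemma LLam_connected a b : Lam b -> conn a b -> forall v, LL a v <-> LL b v.
Proof.
move=> hb ab.
have mono a1 a2 : (forall c, inCl a1 c -> inCl a2 c) -> forall v, LL a1 v -> LL a2 v.
  move=> hm v [h [w [hh [hw ->]]]]; exists h, w; split; last split=> //.
    by apply: span_mono hh => w' [c [x [y [hc rest]]]]; exists c, x, y; split=> //; apply: hm.
  by apply: (fsum_of_mono (VLgen a1) (VLgen a2) _ _ hw) => c x [hc hx]; split=> //; apply: hm.
by move=> v; split; apply: mono => c /(inClass_connected hb ab c).
Qed.

Lemma LLam_br_disconnected a b : Lam a -> Lam b -> ~ conn a b ->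
  forall x y, LL a x -> LL b y -> br x y = 0.
Proof.
move=> ha hb nab.
have nba : ~ conn b a by move=> ba; apply: nab; apply: connected_sym ha ba.
move=> x y hx hy; move: x hx y hy.
apply: (LLam_ind (P := fun x => forall y, LL b y -> br x y = 0)).
- split=> [y _|c u v hu hv y hy]; first by rewrite br0l.
  by rewrite (br_linl y) hu // hv // scaler0 addr0.
- move=> b1 u v hb1 hu hv; apply: LLam_ind; first exact: subspace_ker (br_linr _).
    move=> b2 u' v' hb2 hu' hv'.
    by apply: H_abelian; [exact: ws_opp_br_H hu hv | exact: ws_opp_br_H hu' hv'].
  move=> b2 z hb2 hz.
  exact: proj2 (br_opp_ws_disconnected (proj1 hb1) (proj1 hb2)
    (inClass_disconnected ha hb1 hb2 nab) hu hv hz).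
move=> b1 x hb1 hx; apply: LLam_ind; first exact: subspace_ker (br_linr _).
  move=> b2 u' v' hb2 hu' hv'.
  exact: proj1 (br_opp_ws_disconnected (proj1 hb2) (proj1 hb1)
    (inClass_disconnected hb hb2 hb1 nba) hu' hv' hx).
move=> b2 z hb2 hz.
exact: br_ws_disconnected (proj1 hb1) (proj1 hb2) (inClass_disconnected ha hb1 hb2 nab) hx hz.
Qed.

Lemma LLam_sum_decomp U : complement_in_H br phi grading H U ->
  forall v, exists u n (a : 'I_n -> L -> K) (x : 'I_n -> L),
     U u /\ (forall i, Lam (a i) /\ LL (a i) (x i)) /\ v = u + \sum_(i < n) x i.
Proof.
move=> [_ [_ [_ Udec]]] v.
have [h [n [a [x [hh [hx ->]]]]]] := proj1 hsplit v.
have [u [w [hu [hw ->]]]] := Udec h hh.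
pose Q b y := Lam b /\ LL b y.
have hQ : subspace (fsum_of Q).
  apply: (fsum_of_subspace Q (fun _ b => b)) => c b y [hb hy].
  by split=> //; apply: subspaceZ (LLam_subspace b) _ _ hy.
suff [m [b [y [hy e]]]] : fsum_of Q (w + \sum_i x i).
  by exists u, m, b, y; rewrite -addrA e.
apply: (subspaceD hQ).
  apply: (span_ind hQ) hw => _ [b [x' [y' [hb [hx' [hy' ->]]]]]].
  apply: (fsum_of_gen Q b); split=> //; apply: HLam_LLam.
  exact: HLam_gen (conj hb (connected_refl hb)) hx' hy'.
apply: (subspace_sum hQ) => i _; have [ha hxi] := hx i.
apply: (fsum_of_gen Q (a i)); split=> //; apply: VLam_LLam.
exact: VLam_gen (conj ha (connected_refl ha)) hxi.
Qed.

End HomLieColorRoots.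

Theorem mainTheorem10 (K : fieldType) (G : zmodType) (L : lmodType K)
  (br : L -> L -> L) (phi phiinv : L -> L) (eps : G -> G -> K)
  (grading : G -> L -> Prop) (H U : L -> Prop) :
  HomLieColorAlgebra br phi eps grading ->
  cancel phi phiinv -> cancel phiinv phi ->
  max_abelian_graded_subalgebra br phi grading H ->
  split_alg br phi grading H ->
  symmetric_roots br phi grading H ->
  complement_in_H br phi grading H U ->
  (forall a b, inLambda br phi grading H a -> inLambda br phi grading H b ->
     connected br phi phiinv grading H a b ->
     forall v, LLam br phi phiinv grading H a v <-> LLam br phi phiinv grading H b v) /\
  (forall a, inLambda br phi grading H a ->
     ideal br phi grading (LLam br phi phiinv grading H a)) /\
  (forall v, exists u n (a : 'I_n -> L -> K) (x : 'I_n -> L),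
     U u /\ (forall i, inLambda br phi grading H (a i) /\
                       LLam br phi phiinv grading H (a i) (x i)) /\
     v = u + \sum_(i < n) x i) /\
  (forall a b, inLambda br phi grading H a -> inLambda br phi grading H b ->
     ~ connected br phi phiinv grading H a b ->
     forall x y, LLam br phi phiinv grading H a x ->
                 LLam br phi phiinv grading H b y -> br x y = 0).
Proof.
move=> hA phiK phiinvK hmax hsplit hsym hU.
split; first by move=> a b _; exact: (LLam_connected hA phiK phiinvK hmax hsym).
split; first by move=> a _; exact: (LLam_ideal hA phiK phiinvK hmax hsplit hsym).
split; first exact: (LLam_sum_decomp phiinv hA hsplit hU).
exact: (LLam_br_disconnected hA phiK phiinvK hmax hsplit hsym).
Qed.
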